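(* Let $\theta\in\mathbb{R}\setminus\mathbb{Q}$ with best rational approximants $(p_n/q_n)_{n\ge0}$, and let $q'$ be a subsequence of $(q_n)_{n\ge0}$. Then there exist $\mu\in\mathbb{R}$ and a dense $G_\delta$-subset $E_1$ of $l^\infty$ such that for every $u\in E_1$, the radius of convergence of the power series $\varphi_{\mu,q',u}$ equals $1$, and also the radius of convergence of $\varphi_{\mu,q'}$ (the series $\varphi_{\mu,q',u}$ for the constant sequence $u_m\equiv1$) equals $1$.
   Context: Best rational approximants $p_n/q_n$ of an irrational $\theta$ are its continued fraction convergents, with $\gcd(p_n,q_n)=1$, $q_n\ge0$. A subsequence $q'$ of $(q_n)$ means $q'_n=q_{k_n}$ with $k_n$ strictly increasing. $l^\infty$ is the complex Banach space of bounded complex sequences $u=(u_m)_{m\ge0}$ with the sup norm. For $\mu\in\mathbb{R}$ and $u\in l^\infty$, $\varphi_{\mu,q',u}(z)=z e^{2\pi i\mu}\sum_{n=0}^\infty u_{q'_n}(1-e^{2\pi i q'_n\mu})z^{q'_n}$, where $u_{q'_n}$ is the $q'_n$-th term of $u$. *)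

From Stdlib Require Import Reals Lra Lia ZArith.
Open Scope R_scope.

Definition Cpx := (R * R)%type.
Definition Cadd (z w : Cpx) : Cpx := (fst z + fst w, snd z + snd w).
Definition Csub (z w : Cpx) : Cpx := (fst z - fst w, snd z - snd w).
Definition Cmul (z w : Cpx) : Cpx :=
  (fst z * fst w - snd z * snd w, fst z * snd w + snd z * fst w).
Definition Czero : Cpx := (0, 0).
Definition Cone : Cpx := (1, 0).
Definition Cmod (z : Cpx) : R := sqrt (fst z ^ 2 + snd z ^ 2).
Definition Cexpi (t : R) : Cpx := (cos t, sin t).

Definition irrational (x : R) : Prop :=
  forall (p q : Z), q <> 0%Z -> x <> IZR p / IZR q.

(** * Continued fraction expansion and convergent denominators q_n.
    floor = Int_part;  theta_0 = theta, theta_{n+1} = 1/(theta_n - floor theta_n),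
    a_n = floor theta_n,  q_{-1} = 0, q_0 = 1, q_{n+1} = a_{n+1} q_n + q_{n-1}. *)
Fixpoint cf_rem (theta : R) (n : nat) : R :=
  match n with
  | O => theta
  | S k => / (cf_rem theta k - IZR (Int_part (cf_rem theta k)))
  end.

Definition cf_a (theta : R) (n : nat) : Z := Int_part (cf_rem theta n).

(** returns (q_{n-1}, q_n) *)
Fixpoint cf_q_aux (theta : R) (n : nat) : nat * nat :=
  match n with
  | O => (0%nat, 1%nat)
  | S k => let (qm, qk) := cf_q_aux theta k in
           (qk, (Z.to_nat (cf_a theta (S k)) * qk + qm)%nat)
  end.

Definition cf_q (theta : R) (n : nat) : nat := snd (cf_q_aux theta n).

Definition linf (u : nat -> Cpx) : Prop :=
  exists M : R, forall m : nat, Cmod (u m) <= M.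

Definition supdist_lt (u v : nat -> Cpx) (eps : R) : Prop :=
  exists delta : R, delta < eps /\ forall m : nat, Cmod (Csub (u m) (v m)) <= delta.

Definition linf_open (O : (nat -> Cpx) -> Prop) : Prop :=
  forall u, linf u -> O u ->
    exists eps, 0 < eps /\ forall v, linf v -> supdist_lt u v eps -> O v.

Definition linf_Gdelta (E : (nat -> Cpx) -> Prop) : Prop :=
  exists O : nat -> ((nat -> Cpx) -> Prop),
    (forall j, linf_open (O j)) /\
    (forall u, E u <-> (linf u /\ forall j, O j u)).

Definition linf_dense (E : (nat -> Cpx) -> Prop) : Prop :=
  (forall u, E u -> linf u) /\
  forall u eps, linf u -> 0 < eps -> exists v, E v /\ supdist_lt u v eps.

Definition radius_is (a : nat -> Cpx) (rho : R) : Prop :=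
  is_lub (fun r => 0 <= r /\ exists M, forall k, Cmod (a k) * r ^ k <= M) rho.

Fixpoint Csum (f : nat -> Cpx) (n : nat) : Cpx :=
  match n with
  | O => f O
  | S k => Cadd (Csum f k) (f (S k))
  end.

(** Coefficient sequence of
      phi_{mu,q',u}(z) = z e^{2 pi i mu} sum_n u_{q'_n} (1 - e^{2 pi i q'_n mu}) z^{q'_n}:
    the coefficient of z^k is the sum of the terms with q'_n + 1 = k.
    (Since q'_n >= n, only indices n <= k can contribute.) *)
Definition phi_term (mu : R) (q' : nat -> nat) (u : nat -> Cpx) (n : nat) : Cpx :=
  Cmul (Cexpi (2 * PI * mu))
       (Cmul (u (q' n)) (Csub Cone (Cexpi (2 * PI * INR (q' n) * mu)))).

Definition phi_coef (mu : R) (q' : nat -> nat) (u : nat -> Cpx) (k : nat) : Cpx :=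
  Csum (fun n => if Nat.eqb (q' n + 1) k then phi_term mu q' u n else Czero) k.

From Stdlib Require Import Reals Lra Lia ZArith Psatz Wf_nat Classical.
From Coquelicot Require Complex.
Open Scope R_scope.

(* Take mu = sqrt 2.  Since sqrt 2 is badly approximable, |1 - e^{2 pi i m mu}| >= 1/(2m) for every
   m >= 1, so for n >= 2 the coefficient of z^{q'_n + 1} has modulus at least |u_{q'_n}| / (2 q'_n),
   while all coefficients stay bounded when u is bounded.  Bounded coefficients give radius >= 1,
   and the radius is <= 1 as soon as |u_{q'_n}| r^{q'_n} / (2 q'_n) is unbounded in n for every r > 1;
   this holds for u = 1 since r^m / m is unbounded.  For rho_j = 1 + 1/(j+1) the sets of u for which
   some coefficient term |u_{q'_n}| |1 - e^{2 pi i q'_n mu}| rho_j^{q'_n} exceeds j are open, and their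
   intersection E1 is dense because pushing the small entries of u up to a fixed modulus d > 0 puts u
   into all of them at once. *)

Lemma Cmod_ge0 z : 0 <= Cmod z.
Proof. exact (Complex.Cmod_ge_0 z). Qed.

Lemma Cmod_Czero : Cmod Czero = 0.
Proof. exact Complex.Cmod_0. Qed.

Lemma Cmod_Cone : Cmod Cone = 1.
Proof. exact Complex.Cmod_1. Qed.

Lemma Cmod_real x : Cmod (x, 0) = Rabs x.
Proof. exact (Complex.Cmod_R x). Qed.

Lemma Cmod_Cmul z w : Cmod (Cmul z w) = Cmod z * Cmod w.
Proof. exact (Complex.Cmod_mult z w). Qed.

Lemma Cmod_Cadd_le z w : Cmod (Cadd z w) <= Cmod z + Cmod w.
Proof. exact (Complex.Cmod_triangle z w). Qed.

Lemma Cmod_Csub_le z w : Cmod (Csub z w) <= Cmod z + Cmod w.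
Proof.
  pose proof (Complex.Cmod_triangle z (Complex.Copp w)) as H.
  rewrite Complex.Cmod_opp in H. exact H.
Qed.

Lemma Cmod_le_Csub z w : Cmod z <= Cmod w + Cmod (Csub z w).
Proof.
  assert (E : z = Cadd w (Csub z w))
    by (destruct z, w; unfold Cadd, Csub; simpl; f_equal; ring).
  rewrite E at 1. apply Cmod_Cadd_le.
Qed.

Lemma Cmod_Cexpi t : Cmod (Cexpi t) = 1.
Proof.
  unfold Cmod, Cexpi; simpl.
  pose proof (sin2_cos2 t) as H; unfold Rsqr in H.
  replace (cos t * (cos t * 1) + sin t * (sin t * 1)) with 1 by lra. apply sqrt_1.
Qed.

Lemma Cmod_one_sub_Cexpi x : Cmod (Csub Cone (Cexpi (2 * PI * x))) = 2 * Rabs (sin (PI * x)).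
Proof.
  unfold Cmod, Csub, Cone, Cexpi; simpl.
  replace (2 * PI * x) with (2 * (PI * x)) by ring.
  rewrite cos_2a_sin, sin_2a.
  pose proof (sin2_cos2 (PI * x)) as H; unfold Rsqr in H.
  set (s := sin (PI * x)) in *; set (c := cos (PI * x)) in *.
  replace (_ + _) with (Rsqr (2 * s)) by (unfold Rsqr; nra).
  rewrite sqrt_Rsqr_abs, Rabs_mult, (Rabs_right 2) by lra. reflexivity.
Qed.

Lemma sin_ge_third a : 0 <= a <= 2 -> a / 3 <= sin a.
Proof.
  intros Ha. assert (a <= PI) by (pose proof PI2_1; lra).
  destruct (SIN a ltac:(lra) ltac:(lra)) as [Hlb _].
  eapply Rle_trans; [|exact Hlb].
  unfold sin_lb, sin_approx, sin_term; simpl.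
  assert (0 <= a ^ 5 * (42 - a ^ 2)) by (apply Rmult_le_pos; [apply pow_le|]; nra).
  simpl in *. nra.
Qed.

Lemma Rabs_sin_shift a (p : Z) : Rabs (sin (a + IZR p * PI)) = Rabs (sin a).
Proof.
  assert (Hs : sin (IZR p * PI) = 0) by (apply sin_eq_0_1; eauto).
  assert (Hc : Rabs (cos (IZR p * PI)) = 1).
  { rewrite <- Rabs_R1. apply Rsqr_eq_abs_0.
    pose proof (sin2_cos2 (IZR p * PI)) as H. rewrite Hs in H. unfold Rsqr in *. lra. }
  rewrite sin_plus, Hs, Rmult_0_r, Rplus_0_r, Rabs_mult, Hc. ring.
Qed.

Lemma Rabs_sin_PI_ge x d : (forall p : Z, d <= Rabs (x - IZR p)) -> d <= Rabs (sin (PI * x)).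
Proof.
  intros Hd. destruct (base_Int_part x) as [Hp1 Hp2].
  set (p := Int_part x) in *. set (f := x - IZR p).
  replace (PI * x) with (PI * f + IZR p * PI) by (unfold f; ring).
  rewrite Rabs_sin_shift.
  pose proof PI2_3_2. pose proof PI_4.
  destruct (Rle_lt_dec f (1/2)) as [Hf|Hf].
  - pose proof (Hd p) as Hdp. fold f in Hdp. rewrite Rabs_right in Hdp by (unfold f; lra).
    pose proof (sin_ge_third (PI * f) ltac:(unfold f in *; nra)).
    rewrite Rabs_right by (unfold f in *; nra). unfold f in *; nra.
  - pose proof (Hd (p + 1)%Z) as Hdp. rewrite plus_IZR in Hdp.
    rewrite Rabs_left1 in Hdp by (unfold f in *; lra).
    rewrite <- sin_PI_x. replace (PI - PI * f) with (PI * (1 - f)) by ring.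
    pose proof (sin_ge_third (PI * (1 - f)) ltac:(unfold f in *; nra)).
    rewrite Rabs_right by (unfold f in *; nra). unfold f in *; nra.
Qed.

Lemma sqr_ne_twice_sqr (p q : Z) : q <> 0%Z -> (p * p <> 2 * (q * q))%Z.
Proof.
  remember (Z.abs_nat q) as n eqn:Hn. revert p q Hn.
  induction n as [n IH] using lt_wf_ind. intros p q Hn Hq Heq.
  destruct (Z.Even_or_Odd p) as [[a ->]|[a ->]]; [|nia].
  destruct (Z.Even_or_Odd q) as [[b ->]|[b ->]]; [|nia].
  apply (IH (Z.abs_nat b) ltac:(lia) a b); lia.
Qed.

Lemma sqrt2_badly_approximable (q : nat) (p : Z) :
  (1 <= q)%nat -> / (4 * INR q) <= Rabs (INR q * sqrt 2 - IZR p).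
Proof.
  intros Hq. assert (Q1 : 1 <= INR q) by (apply (le_INR 1); exact Hq).
  assert (S2 : sqrt 2 * sqrt 2 = 2) by (apply sqrt_sqrt; lra).
  assert (S0 : 0 < sqrt 2) by (apply sqrt_lt_R0; lra).
  assert (Sb : sqrt 2 < 3 / 2) by nra.
  set (x := INR q * sqrt 2).
  assert (Hinv : / (4 * INR q) <= 1 / 4)
    by (apply Rle_trans with (/ 4); [apply Rinv_le_contravar|]; lra).
  destruct (Rle_lt_dec 1 (Rabs (x - IZR p))) as [Hfar|Hnear]; [lra|].
  assert (Hsum : Rabs (x + IZR p) <= 4 * INR q).
  { replace (x + IZR p) with (2 * x - (x - IZR p)) by ring.
    eapply Rle_trans; [apply Rabs_triang|]. rewrite Rabs_Ropp, (Rabs_right (2 * x)) by (unfold x; nra).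
    unfold x in *; nra. }
  assert (Hprod : 1 <= Rabs (x - IZR p) * Rabs (x + IZR p)).
  { rewrite <- Rabs_mult.
    replace ((x - IZR p) * (x + IZR p)) with (IZR (2 * (Z.of_nat q * Z.of_nat q) - p * p))
      by (rewrite minus_IZR, !mult_IZR, <- INR_IZR_INZ; unfold x; nra).
    rewrite <- abs_IZR. apply IZR_le.
    pose proof (sqr_ne_twice_sqr p (Z.of_nat q) ltac:(lia)). lia. }
  apply (Rmult_le_reg_r (4 * INR q)); [lra|].
  rewrite Rinv_l by lra. pose proof (Rabs_pos (x - IZR p)). nra.
Qed.

Lemma Cmod_one_sub_Cexpi_sqrt2 (q : nat) :
  (1 <= q)%nat -> / (2 * INR q) <= Cmod (Csub Cone (Cexpi (2 * PI * INR q * sqrt 2))).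
Proof.
  intros Hq. assert (Q1 : 1 <= INR q) by (apply (le_INR 1); exact Hq).
  replace (2 * PI * INR q * sqrt 2) with (2 * PI * (INR q * sqrt 2)) by ring.
  rewrite Cmod_one_sub_Cexpi.
  assert (H : / (4 * INR q) <= Rabs (sin (PI * (INR q * sqrt 2))))
    by (apply Rabs_sin_PI_ge; intro p; apply sqrt2_badly_approximable; exact Hq).
  replace (/ (2 * INR q)) with (2 * / (4 * INR q)) by (field; lra). lra.
Qed.

Lemma pow_ge_sqr r n : 1 < r -> (INR n * (sqrt r - 1)) ^ 2 <= r ^ n.
Proof.
  intros Hr. assert (Hs : 1 < sqrt r) by (rewrite <- sqrt_1; apply sqrt_lt_1; lra).
  pose proof (poly n (sqrt r - 1) ltac:(lra)) as Hb.
  replace (1 + (sqrt r - 1)) with (sqrt r) in Hb by ring.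
  pose proof (pos_INR n).
  assert (0 <= INR n * (sqrt r - 1)) by nra.
  replace (r ^ n) with (sqrt r ^ n * sqrt r ^ n)
    by (rewrite <- Rpow_mult_distr, sqrt_sqrt by lra; reflexivity).
  simpl. nra.
Qed.

Lemma pow_div_unbounded r M :
  1 < r -> exists N, forall m, (N <= m)%nat -> M < / (2 * INR m) * r ^ m.
Proof.
  intros Hr. set (c := (sqrt r - 1) ^ 2).
  assert (Hc : 0 < c).
  { assert (1 < sqrt r) by (rewrite <- sqrt_1; apply sqrt_lt_1; lra).
    unfold c; simpl; nra. }
  destruct (INR_unbounded (2 * M / c)) as [N HN].
  exists (S N). intros m Hm.
  assert (Hm1 : INR (S N) <= INR m) by (apply le_INR; exact Hm).
  rewrite S_INR in Hm1. pose proof (pos_INR N).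
  pose proof (pow_ge_sqr r m Hr) as Hsq. fold c in Hsq.
  replace ((INR m * (sqrt r - 1)) ^ 2) with (INR m * INR m * c) in Hsq by (unfold c; ring).
  assert (Hlow : INR m * c / 2 <= / (2 * INR m) * r ^ m).
  { apply (Rmult_le_reg_l (2 * INR m)); [lra|].
    rewrite <- Rmult_assoc, Rinv_r by lra. lra. }
  assert (2 * M < INR m * c).
  { apply Rlt_le_trans with (INR N * c); [|nra].
    apply (Rmult_lt_compat_r c) in HN; [|exact Hc].
    unfold Rdiv in HN. rewrite Rmult_assoc, Rinv_l, Rmult_1_r in HN by lra. lra. }
  lra.
Qed.

Lemma radius_is_one (c : nat -> Cpx) :
  (exists B, forall k, Cmod (c k) <= B) ->
  (forall r, 1 < r -> forall M, exists k, M < Cmod (c k) * r ^ k) ->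
  radius_is c 1.
Proof.
  intros [B HB] Hunb. split.
  - intros r [Hr [M HM]]. destruct (Rle_lt_dec r 1) as [|Hr1]; [assumption|].
    destruct (Hunb r Hr1 M) as [k Hk]. specialize (HM k). lra.
  - intros b Hb. apply Hb. split; [lra|].
    exists B. intro k. rewrite pow1, Rmult_1_r. apply HB.
Qed.

Lemma Csum_zero f K : (forall m, (m <= K)%nat -> f m = Czero) -> Csum f K = Czero.
Proof.
  induction K as [|K IH]; intros Hf; simpl.
  - apply Hf. lia.
  - rewrite IH, Hf by (lia || (intros m Hm; apply Hf; lia)).
    unfold Cadd, Czero; simpl. f_equal; ring.
Qed.

Lemma Csum_single f K n :
  (n <= K)%nat -> (forall m, (m <= K)%nat -> m <> n -> f m = Czero) -> Csum f K = f n.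
Proof.
  induction K as [|K IH]; intros Hn Hf; simpl.
  - f_equal. lia.
  - destruct (Nat.eq_dec n (S K)) as [->|Hne].
    + rewrite Csum_zero by (intros m Hm; apply Hf; lia).
      destruct (f (S K)); unfold Cadd, Czero; simpl. f_equal; ring.
    + rewrite IH, (Hf (S K)) by (lia || (intros m Hm; apply Hf; lia)).
      destruct (f n); unfold Cadd, Czero; simpl. f_equal; ring.
Qed.

Lemma Csum_succ_l f K : Csum f (S K) = Cadd (f 0%nat) (Csum (fun m => f (S m)) K).
Proof.
  induction K as [|K IH]; [reflexivity|].
  change (Csum f (S (S K))) with (Cadd (Csum f (S K)) (f (S (S K)))).
  rewrite IH. simpl. unfold Cadd; simpl. f_equal; ring.
Qed.

Lemma Cmod_Csum_single_support f K B :
  (forall m, Cmod (f m) <= B) ->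
  (forall m m', f m <> Czero -> f m' <> Czero -> m = m') ->
  Cmod (Csum f K) <= B.
Proof.
  intros HB Huniq.
  destruct (classic (exists m, (m <= K)%nat /\ f m <> Czero)) as [[m [Hm Hfm]]|Hnone].
  - rewrite (Csum_single f K m Hm); [apply HB|].
    intros m' _ Hne. apply NNPP. intros Hfm'. exact (Hne (Huniq m' m Hfm' Hfm)).
  - rewrite Csum_zero, Cmod_Czero.
    + pose proof (Cmod_ge0 (f 0%nat)). pose proof (HB 0%nat). lra.
    + intros m Hm. apply NNPP. intros Hfm. apply Hnone. eauto.
Qed.

Lemma Cmod_Csum_head_single_support f K B :
  (forall m, Cmod (f m) <= B) ->
  (forall m m', (1 <= m)%nat -> (1 <= m')%nat -> f m <> Czero -> f m' <> Czero -> m = m') ->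
  Cmod (Csum f K) <= 2 * B.
Proof.
  intros HB Huniq. pose proof (Cmod_ge0 (f 0%nat)). pose proof (HB 0%nat).
  destruct K as [|K]; [simpl; lra|].
  rewrite Csum_succ_l. eapply Rle_trans; [apply Cmod_Cadd_le|].
  assert (Cmod (Csum (fun m => f (S m)) K) <= B).
  { apply Cmod_Csum_single_support; [intro; apply HB|].
    intros m m' Hm Hm'. assert (S m = S m') by (apply Huniq; auto with arith). lia. }
  lra.
Qed.

Lemma nat_le_mono_S (f : nat -> nat) :
  (forall n, (f n <= f (S n))%nat) -> forall m n, (m <= n)%nat -> (f m <= f n)%nat.
Proof. intros Hf m n Hmn. induction Hmn as [|n _ IH]; [lia|]. specialize (Hf n). lia. Qed.

Lemma nat_lt_mono_S_from (f : nat -> nat) a :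
  (forall n, (a <= n)%nat -> (f n < f (S n))%nat) ->
  forall m n, (a <= m)%nat -> (m < n)%nat -> (f m < f n)%nat.
Proof.
  intros Hf m n Ham Hmn. induction Hmn as [|n Hmn IH]; [apply Hf; lia|].
  specialize (Hf n ltac:(lia)). lia.
Qed.

Lemma nat_ge_id_of_lt_S (f : nat -> nat) : (forall n, (f n < f (S n))%nat) -> forall n, (n <= f n)%nat.
Proof. intros Hf n. induction n as [|n IH]; [lia|]. specialize (Hf n). lia. Qed.

Lemma frac_part_pos x : irrational x -> 0 < x - IZR (Int_part x) < 1.
Proof.
  intros Hx. destruct (base_Int_part x) as [H1 H2]. split; [|lra].
  destruct H1 as [H1|H1]; [lra|].
  exfalso. apply (Hx (Int_part x) 1%Z); [lia|]. rewrite H1. field.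
Qed.

Lemma irrational_cf_step x : irrational x -> irrational (/ (x - IZR (Int_part x))).
Proof.
  intros Hx p q Hq Heq. pose proof (frac_part_pos x Hx) as Hf.
  set (m := Int_part x) in *.
  assert (Hp : p <> 0%Z).
  { intros ->. rewrite Rdiv_0_l in Heq. apply (Rinv_neq_0_compat (x - IZR m)); lra. }
  apply (Hx (m * p + q)%Z p Hp).
  assert (IZR p <> 0) by (apply not_0_IZR; exact Hp).
  assert (IZR q <> 0) by (apply not_0_IZR; exact Hq).
  assert (Hfrac : x - IZR m = IZR q / IZR p)
    by (rewrite <- (Rinv_inv (x - IZR m)), Heq; field; split; assumption).
  rewrite plus_IZR, mult_IZR. replace x with (IZR m + IZR q / IZR p) by lra. field. assumption.
Qed.

Lemma irrational_cf_rem theta n : irrational theta -> irrational (cf_rem theta n).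
Proof. intros H. induction n as [|n IH]; [exact H|]. exact (irrational_cf_step _ IH). Qed.

Lemma cf_a_S_pos theta n : irrational theta -> (1 <= Z.to_nat (cf_a theta (S n)))%nat.
Proof.
  intros H. unfold cf_a. simpl.
  pose proof (frac_part_pos _ (irrational_cf_rem theta n H)) as Hf.
  set (y := / (cf_rem theta n - IZR (Int_part (cf_rem theta n)))).
  assert (1 < y) by (unfold y; rewrite <- Rinv_1; apply Rinv_lt_contravar; lra).
  destruct (base_Int_part y) as [H1 H2].
  assert (Hz : 0 < IZR (Int_part y)) by lra. apply lt_IZR in Hz. lia.
Qed.

Lemma cf_q_aux_S theta n :
  cf_q_aux theta (S n) =
  (cf_q theta n, Z.to_nat (cf_a theta (S n)) * cf_q theta n + fst (cf_q_aux theta n))%nat.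
Proof. unfold cf_q. simpl. destruct (cf_q_aux theta n). reflexivity. Qed.

Lemma cf_q_S theta n :
  cf_q theta (S n) = (Z.to_nat (cf_a theta (S n)) * cf_q theta n + fst (cf_q_aux theta n))%nat.
Proof. unfold cf_q at 1. rewrite cf_q_aux_S. reflexivity. Qed.

Lemma cf_q_le_S theta n : irrational theta -> (cf_q theta n <= cf_q theta (S n))%nat.
Proof. intros H. rewrite cf_q_S. pose proof (cf_a_S_pos theta n H). nia. Qed.

Lemma cf_q_pos theta n : irrational theta -> (1 <= cf_q theta n)%nat.
Proof.
  intros H. induction n as [|n IH]; [reflexivity|].
  pose proof (cf_q_le_S theta n H). lia.
Qed.

Lemma cf_q_lt_S theta n : irrational theta -> (1 <= n)%nat -> (cf_q theta n < cf_q theta (S n))%nat.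
Proof.
  intros H Hn. destruct n as [|n]; [lia|].
  rewrite (cf_q_S theta (S n)), (cf_q_aux_S theta n). simpl fst.
  pose proof (cf_a_S_pos theta (S n) H). pose proof (cf_q_pos theta n H). nia.
Qed.

Lemma cf_q_ge_id theta n : irrational theta -> (n <= cf_q theta n)%nat.
Proof.
  intros H. induction n as [|[|n] IH]; [lia| |].
  - exact (cf_q_pos theta 1 H).
  - pose proof (cf_q_lt_S theta (S n) H ltac:(lia)). lia.
Qed.

Lemma cf_q_le theta m n : irrational theta -> (m <= n)%nat -> (cf_q theta m <= cf_q theta n)%nat.
Proof. intros H. apply nat_le_mono_S. intros; apply cf_q_le_S, H. Qed.

Lemma cf_q_lt theta m n :
  irrational theta -> (1 <= m)%nat -> (m < n)%nat -> (cf_q theta m < cf_q theta n)%nat.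
Proof. intros H. apply nat_lt_mono_S_from. intros; apply cf_q_lt_S; assumption. Qed.

Section PhiRadius.

Variables (mu : R) (q : nat -> nat).

Hypothesis mu_badly_approximable :
  forall m, (1 <= m)%nat -> / (2 * INR m) <= Cmod (Csub Cone (Cexpi (2 * PI * INR m * mu))).
Hypothesis q_ge_id : forall n, (n <= q n)%nat.
Hypothesis q_le : forall m n, (m <= n)%nat -> (q m <= q n)%nat.
Hypothesis q_lt : forall m n, (1 <= m)%nat -> (m < n)%nat -> (q m < q n)%nat.

Definition gap (n : nat) : R := Cmod (Csub Cone (Cexpi (2 * PI * INR (q n) * mu))).

Lemma gap_ge0 n : 0 <= gap n.
Proof. apply Cmod_ge0. Qed.

Lemma gap_le_2 n : gap n <= 2.
Proof. unfold gap. eapply Rle_trans; [apply Cmod_Csub_le|]. rewrite Cmod_Cone, Cmod_Cexpi. lra. Qed.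

Lemma Cmod_phi_term u n : Cmod (phi_term mu q u n) = Cmod (u (q n)) * gap n.
Proof. unfold phi_term, gap. rewrite !Cmod_Cmul, Cmod_Cexpi. ring. Qed.

Lemma q_inj m n : (1 <= m)%nat -> (1 <= n)%nat -> q m = q n -> m = n.
Proof.
  intros Hm Hn E. destruct (Nat.lt_total m n) as [H|[H|H]]; [|exact H|].
  - pose proof (q_lt m n Hm H). lia.
  - pose proof (q_lt n m Hn H). lia.
Qed.

(* The terms n = 0 and n = 1 may share the exponent q 0 = q 1; from n = 2 on each exponent is hit once. *)
Lemma phi_coef_single u n : (2 <= n)%nat -> phi_coef mu q u (q n + 1) = phi_term mu q u n.
Proof.
  intros Hn. unfold phi_coef.
  rewrite (Csum_single _ _ n); [rewrite Nat.eqb_refl; reflexivity| pose proof (q_ge_id n); lia|].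
  intros m Hm Hmn. destruct (Nat.eqb_spec (q m + 1) (q n + 1)) as [E|]; [exfalso|reflexivity].
  destruct m as [|m].
  - pose proof (q_le 0 1 ltac:(lia)). pose proof (q_lt 1 n ltac:(lia) ltac:(lia)). lia.
  - apply Hmn, q_inj; lia.
Qed.

Lemma phi_coef_bounded u : linf u -> exists B, forall K, Cmod (phi_coef mu q u K) <= B.
Proof.
  intros [M HM]. exists (2 * (2 * M)). intros K. unfold phi_coef.
  apply Cmod_Csum_head_single_support.
  - intros m. destruct (Nat.eqb (q m + 1) K).
    + rewrite Cmod_phi_term. pose proof (HM (q m)). pose proof (Cmod_ge0 (u (q m))).
      pose proof (gap_ge0 m). pose proof (gap_le_2 m). nra.
    + rewrite Cmod_Czero. pose proof (Cmod_ge0 (u 0%nat)). pose proof (HM 0%nat). lra.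
  - intros m m' Hm Hm'.
    destruct (Nat.eqb_spec (q m + 1) K), (Nat.eqb_spec (q m' + 1) K);
      intros H1 H2; [apply q_inj; lia|congruence..].
Qed.

Lemma gap_pow_unbounded r M : 1 < r -> exists n, (2 <= n)%nat /\ M < gap n * r ^ q n.
Proof.
  intros Hr. destruct (pow_div_unbounded r M Hr) as [N HN].
  exists (Nat.max N 2). split; [lia|].
  set (n := Nat.max N 2). pose proof (q_ge_id n).
  specialize (HN (q n) ltac:(lia)).
  pose proof (mu_badly_approximable (q n) ltac:(lia)) as Hgap. fold (gap n) in Hgap.
  assert (0 < r ^ q n) by (apply pow_lt; lra).
  assert (/ (2 * INR (q n)) * r ^ q n <= gap n * r ^ q n) by (apply Rmult_le_compat_r; lra).
  lra.
Qed.

Lemma radius_one_of_large_terms u :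
  linf u ->
  (forall r, 1 < r -> forall M, exists n, (2 <= n)%nat /\ M < Cmod (u (q n)) * gap n * r ^ q n) ->
  radius_is (phi_coef mu q u) 1.
Proof.
  intros Hu Hlarge. apply radius_is_one; [exact (phi_coef_bounded u Hu)|].
  intros r Hr M. destruct (Hlarge r Hr M) as [n [Hn HM]].
  exists (q n + 1)%nat. rewrite phi_coef_single, Cmod_phi_term, pow_add, pow_1 by exact Hn.
  assert (0 <= Cmod (u (q n)) * gap n * r ^ q n)
    by (pose proof (Cmod_ge0 (u (q n))); pose proof (gap_ge0 n);
        pose proof (pow_le r (q n) ltac:(lra)); apply Rmult_le_pos; [apply Rmult_le_pos|]; lra).
  nra.
Qed.

Lemma radius_phi_one : radius_is (phi_coef mu q (fun _ => Cone)) 1.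
Proof.
  apply radius_one_of_large_terms; [exists 1; intros; rewrite Cmod_Cone; lra|].
  intros r Hr M. rewrite Cmod_Cone. setoid_rewrite Rmult_1_l. exact (gap_pow_unbounded r M Hr).
Qed.

Definition rho (j : nat) : R := 1 + / (INR j + 1).

Definition large_term_set (j : nat) (u : nat -> Cpx) : Prop :=
  exists n, (2 <= n)%nat /\ INR j < Cmod (u (q n)) * gap n * rho j ^ q n.

Definition E1 (u : nat -> Cpx) : Prop := linf u /\ forall j, large_term_set j u.

Lemma rho_gt1 j : 1 < rho j.
Proof. unfold rho. pose proof (pos_INR j). pose proof (Rinv_0_lt_compat (INR j + 1) ltac:(lra)). lra. Qed.

Lemma large_term_set_open j : linf_open (large_term_set j).
Proof.
  intros u _ [n [Hn Hlt]].
  set (A := gap n * rho j ^ q n) in *. rewrite Rmult_assoc in Hlt. fold A in Hlt.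
  pose proof (pos_INR j). pose proof (Cmod_ge0 (u (q n))).
  assert (HA : 0 < A).
  { assert (HA0 : 0 <= A)
      by (apply Rmult_le_pos; [apply gap_ge0|apply pow_le; pose proof (rho_gt1 j); lra]).
    destruct (Rle_lt_or_eq_dec _ _ HA0) as [|E]; [assumption|rewrite <- E in Hlt; lra]. }
  exists ((Cmod (u (q n)) * A - INR j) / A). split; [apply Rdiv_lt_0_compat; lra|].
  intros v _ [delta [Hdelta Hclose]]. exists n. split; [exact Hn|].
  rewrite Rmult_assoc. fold A.
  pose proof (Cmod_le_Csub (u (q n)) (v (q n))) as Htri.
  specialize (Hclose (q n)).
  assert (Hv : Cmod (u (q n)) - (Cmod (u (q n)) * A - INR j) / A < Cmod (v (q n))) by lra.
  apply (Rmult_lt_compat_r A) in Hv; [|exact HA].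
  replace ((Cmod (u (q n)) - (Cmod (u (q n)) * A - INR j) / A) * A) with (INR j) in Hv
    by (field; lra).
  exact Hv.
Qed.

Lemma E1_Gdelta : linf_Gdelta E1.
Proof. exists large_term_set. split; [exact large_term_set_open|reflexivity]. Qed.

Lemma E1_dense : linf_dense E1.
Proof.
  split; [intros u [Hu _]; exact Hu|].
  intros u eps [M HM] Heps. set (d := eps / 4).
  set (v := fun m => if Rlt_dec (Cmod (u m)) d then (d, 0) else u m).
  assert (Hvd : forall m, d <= Cmod (v m)).
  { intros m. unfold v. destruct (Rlt_dec (Cmod (u m)) d); [|lra].
    rewrite Cmod_real, Rabs_right; unfold d; lra. }
  exists v. split; [split|].
  - exists (Rmax M d). intros m. unfold v. destruct (Rlt_dec (Cmod (u m)) d).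
    + rewrite Cmod_real, Rabs_right by (unfold d; lra). apply Rmax_r.
    + eapply Rle_trans; [apply HM|apply Rmax_l].
  - intros j. destruct (gap_pow_unbounded (rho j) (INR j / d) (rho_gt1 j)) as [n [Hn Hbig]].
    exists n. split; [exact Hn|]. rewrite Rmult_assoc.
    assert (0 <= gap n * rho j ^ q n)
      by (apply Rmult_le_pos; [apply gap_ge0|apply pow_le; pose proof (rho_gt1 j); lra]).
    apply Rlt_le_trans with (d * (gap n * rho j ^ q n)).
    + apply (Rmult_lt_compat_l d) in Hbig; [|unfold d; lra].
      replace (d * (INR j / d)) with (INR j) in Hbig by (field; unfold d; lra). exact Hbig.
    + apply Rmult_le_compat_r; [assumption|apply Hvd].
  - exists (eps / 2). split; [lra|]. intros m. unfold v.
    destruct (Rlt_dec (Cmod (u m)) d).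
    + eapply Rle_trans; [apply Cmod_Csub_le|]. rewrite Cmod_real, Rabs_right; unfold d in *; lra.
    + replace (Csub (u m) (u m)) with Czero
        by (destruct (u m); unfold Csub, Czero; simpl; f_equal; ring).
      rewrite Cmod_Czero. lra.
Qed.

Lemma E1_radius u : E1 u -> radius_is (phi_coef mu q u) 1.
Proof.
  intros [Hu Hlarge]. apply radius_one_of_large_terms; [exact Hu|].
  intros r Hr M. destruct (INR_unbounded (Rmax M (/ (r - 1)))) as [j Hj].
  pose proof (Rmax_l M (/ (r - 1))). pose proof (Rmax_r M (/ (r - 1))).
  assert (Hrho : rho j <= r).
  { unfold rho. pose proof (Rinv_0_lt_compat (r - 1) ltac:(lra)).
    assert (/ (INR j + 1) < / / (r - 1)) by (apply Rinv_lt_contravar; nra).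
    rewrite Rinv_inv in *. lra. }
  destruct (Hlarge j) as [n [Hn Hlt]]. exists n. split; [exact Hn|].
  assert (rho j ^ q n <= r ^ q n) by (apply pow_incr; pose proof (rho_gt1 j); lra).
  assert (0 <= Cmod (u (q n)) * gap n)
    by (apply Rmult_le_pos; [apply Cmod_ge0|apply gap_ge0]).
  apply Rlt_le_trans with (Cmod (u (q n)) * gap n * rho j ^ q n); [lra|].
  apply Rmult_le_compat_l; assumption.
Qed.

End PhiRadius.

Theorem lemma2p3 (theta : R) (k : nat -> nat) :
  irrational theta ->
  (forall n, (k n < k (S n))%nat) ->
  exists (mu : R) (E1 : (nat -> Cpx) -> Prop),
    linf_Gdelta E1 /\ linf_dense E1 /\
    (forall u, E1 u -> radius_is (phi_coef mu (fun n => cf_q theta (k n)) u) 1) /\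
    radius_is (phi_coef mu (fun n => cf_q theta (k n)) (fun _ => Cone)) 1.
Proof.
  intros Htheta Hk.
  pose proof (nat_ge_id_of_lt_S k Hk) as k_ge_id.
  assert (k_le : forall m n, (m <= n)%nat -> (k m <= k n)%nat)
    by (apply nat_le_mono_S; intros; apply Nat.lt_le_incl, Hk).
  assert (k_lt : forall m n, (m < n)%nat -> (k m < k n)%nat)
    by (intros m n; apply nat_lt_mono_S_from with 0%nat; [intros; apply Hk|lia]).
  assert (q_ge_id : forall n, (n <= cf_q theta (k n))%nat)
    by (intros n; pose proof (k_ge_id n); pose proof (cf_q_ge_id theta (k n) Htheta); lia).
  assert (q_le : forall m n, (m <= n)%nat -> (cf_q theta (k m) <= cf_q theta (k n))%nat)
    by (intros m n Hmn; exact (cf_q_le theta _ _ Htheta (k_le m n Hmn))).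
  assert (q_lt : forall m n, (1 <= m)%nat -> (m < n)%nat -> (cf_q theta (k m) < cf_q theta (k n))%nat)
    by (intros m n Hm Hmn; apply cf_q_lt; [exact Htheta|pose proof (k_ge_id m); lia|exact (k_lt m n Hmn)]).
  pose proof Cmod_one_sub_Cexpi_sqrt2 as sqrt2_gap.
  exists (sqrt 2), (E1 (sqrt 2) (fun n => cf_q theta (k n))).
  split; [|split; [|split]].
  - apply E1_Gdelta.
  - apply E1_dense; assumption.
  - intros u; apply E1_radius; assumption.
  - apply radius_phi_one; assumption.
Qed.
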